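(* Let $d\ge2$, let $\mathbb{F}_q$ be a finite field of odd characteristic, and let $S_j=\{x\in\mathbb{F}_q^d : Q(x)=j\}$ with $j\in\mathbb{F}_q^*$ and $Q$ a non-degenerate quadratic form over $\mathbb{F}_q$. Suppose that for every $x\in\mathbb{F}_q^d\setminus\{(0,\dots,0)\}$, \[\#\{(\alpha,\beta)\in S_j\times S_j:\alpha+\beta=x\}\lesssim q^{d-2}.\] Then $R^*(2\rightarrow 4)\lesssim 1$.
   Context: $\chi$ is a fixed non-trivial additive character of $\mathbb{F}_q$. A quadratic form $Q(x)=\sum_{i,k=1}^d a_{ik}x_ix_k$ with $a_{ik}=a_{ki}\in\mathbb{F}_q$ is non-degenerate if the matrix $(a_{ik})$ is invertible. For $f:S_j\to\mathbb{C}$, $\widehat{fd\sigma}(m)=\frac{1}{\#S_j}\sum_{x\in S_j}\chi(-x\cdot m)f(x)$. Norms: $\|g\|_{L^r(\mathbb{F}_q^d,dm)}=\big(\sum_{m\in\mathbb{F}_q^d}|g(m)|^r\big)^{1/r}$ and $\|f\|_{L^p(S_j,d\sigma)}=\big(\frac{1}{\#S_j}\sum_{x\in S_j}|f(x)|^p\big)^{1/p}$. $R^*(p\rightarrow r)$ is the best constant such that $\|\widehat{fd\sigma}\|_{L^r(\mathbb{F}_q^d,dm)}\le R^*(p\rightarrow r)\|f\|_{L^p(S_j,d\sigma)}$ for all $f:S_j\to\mathbb{C}$. $X\lesssim Y$ means $X\le CY$ for a constant $C$ independent of $q$ (and of $x$). *)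

(* Values of characters / functions live in algC (the complex
   algebraic numbers, a numClosedFieldType containing all roots of unity). *)
From HB Require Import structures.
From mathcomp Require Import all_boot all_order all_algebra algC.
Set Implicit Arguments. Unset Strict Implicit. Unset Printing Implicit Defensive.
Import Order.TTheory GRing.Theory Num.Theory.
Local Open Scope ring_scope.

Section Defs.
Variables (F : finFieldType) (d : nat).

Definition dotp (x m : 'rV[F]_d) : F := \sum_(i < d) x 0 i * m 0 i.

Definition qform (A : 'M[F]_d) (x : 'rV[F]_d) : F :=
  \sum_(i < d) \sum_(k < d) A i k * x 0 i * x 0 k.

Definition nondeg_qform (A : 'M[F]_d) : Prop := A^T = A /\ A \in unitmx.

Definition Sj (A : 'M[F]_d) (j : F) : {set 'rV[F]_d} :=
  [set x | qform A x == j].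

Definition nontriv_add_char (chi : F -> algC) : Prop :=
  chi 0 = 1 /\ (forall a b, chi (a + b) = chi a * chi b) /\ exists a, chi a != 1.

Definition extop (chi : F -> algC) (S : {set 'rV[F]_d}) (f : 'rV[F]_d -> algC)
  (m : 'rV[F]_d) : algC :=
  (#|S|%:R)^-1 * \sum_(x in S) chi (- dotp x m) * f x.

Definition norm4 (g : 'rV[F]_d -> algC) : algC :=
  4.-root (\sum_(m : 'rV[F]_d) `|g m| ^+ 4).

Definition norm2S (S : {set 'rV[F]_d}) (f : 'rV[F]_d -> algC) : algC :=
  sqrtC ((#|S|%:R)^-1 * \sum_(x in S) `|f x| ^+ 2).

(* "R^*(2 -> 4) <= C": since R^*(2->4) is the best (least) constant in the
   extension inequality, R^*(2 -> 4) <= C holds iff C is an admissible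
   constant, i.e. the inequality below holds for all f : S -> C. *)
Definition Rstar_2_4_le (chi : F -> algC) (S : {set 'rV[F]_d}) (C : algC) : Prop :=
  forall f : 'rV[F]_d -> algC, norm4 (extop chi S f) <= C * norm2S S f.

Definition sum_count (S : {set 'rV[F]_d}) (x : 'rV[F]_d) : nat :=
  #|[set p : 'rV[F]_d * 'rV[F]_d | (p.1 \in S) && (p.2 \in S) && (p.1 + p.2 == x)]|.

End Defs.

From HB Require Import structures.
From mathcomp Require Import all_boot all_order all_algebra algC ring zify.
Set Implicit Arguments. Unset Strict Implicit. Unset Printing Implicit Defensive.
Import Order.TTheory GRing.Theory Num.Theory.
Local Open Scope ring_scope.

(* Squaring the extension operator turns it into the Fourier transform of the
   self-convolution [G z = sum_(a + b = z, a, b in S) f a f b], so by Plancherel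
   [||(f dsigma)^||_4^4 = |S|^-4 q^d sum_z |G z|^2].  Each [|G z|] is at most
   [sum_S |f|^2] (AM-GM), and for [z <> 0] Cauchy-Schwarz with the hypothesis gives
   [|G z|^2 <= C q^(d-2) sum_(a + b = z) |f a|^2 |f b|^2], which sums over [z] to
   [C q^(d-2) (sum_S |f|^2)^2].  It then suffices that [q^(d-1) <= 4 |S|]: Gauss sums
   give [(q |S| - q^d)^2 <= (q-1)^2 q^d], which is enough for [d >= 3]; for [d = 2]
   every line through a point [p0] of the conic meets it a second time, except for the
   at most [3q - 1] directions that are isotropic or tangent at [p0]. *)

Lemma normrM_mul2n_le (R : numDomainType) (x y : R) :
  `|x * y| *+ 2 <= `|x| ^+ 2 + `|y| ^+ 2.
Proof.
by rewrite normrM; case: (real_leif_mean_square_scaled (normr_real x) (normr_real y)).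
Qed.

Lemma sqr_norm_sum_le (R : numDomainType) (I : finType) (P : {pred I}) (a : I -> R) :
  `|\sum_(i in P) a i| ^+ 2 <= #|P|%:R * \sum_(i in P) `|a i| ^+ 2.
Proof.
have le_sum_norm : `|\sum_(i in P) a i| ^+ 2 <= (\sum_(i in P) `|a i|) ^+ 2.
  by rewrite ler_pXn2r ?nnegrE ?sumr_ge0 ?ler_norm_sum.
apply: le_trans le_sum_norm _; rewrite expr2 mulr_suml.
rewrite -(ler_pMn2r (isT : (0 < 2)%N)) -sumrMnl.
have -> : (#|P|%:R * \sum_(i in P) `|a i| ^+ 2) *+ 2 =
          \sum_(i in P) \sum_(j in P) (`|a i| ^+ 2 + `|a j| ^+ 2).
  apply/esym; under eq_bigr do rewrite big_split /= sumr_const.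
  by rewrite big_split /= sumr_const sumrMnl mulr2n mulr_natl.
apply: ler_sum => i _; rewrite mulr_sumr -sumrMnl; apply: ler_sum => j _.
by rewrite -normrM normrM_mul2n_le.
Qed.

Section AdditiveCharacter.
Variables (V : finZmodType) (psi : V -> algC).
Hypotheses (psi0 : psi 0 = 1) (psiD : {morph psi : x y / x + y >-> x * y}).

Lemma psiN_mul x : psi (- x) * psi x = 1.
Proof. by rewrite -psiD addNr psi0. Qed.

Lemma psi_neq0 x : psi x != 0.
Proof. by apply: contra_eq_neq (psiN_mul x) => ->; rewrite mulr0 eq_sym oner_neq0. Qed.

(* Translating the product of all values by [x] multiplies it by [psi x ^+ #|V|]. *)
Lemma psiX_card x : psi x ^+ #|V| = 1.
Proof.
have prod_neq0 : \prod_(y : V) psi y != 0 by apply/prodf_neq0 => y _; apply: psi_neq0.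
apply: (mulIf prod_neq0); rewrite mul1r {2}(reindex_inj (addrI x)) /=.
by under [RHS]eq_bigr do rewrite psiD; rewrite big_split /= prodr_const.
Qed.

Lemma norm_psi x : `|psi x| = 1.
Proof.
apply/eqP; rewrite -(pexpr_eq1 (n := #|V|)) ?normr_ge0 //.
  by rewrite -normrX psiX_card normr1.
by apply/card_gt0P; exists 0.
Qed.

Lemma conj_psi x : (psi x)^* = psi (- x).
Proof.
apply: (mulIf (psi_neq0 x)); rewrite psiN_mul mulrC.
by rewrite -normCK norm_psi expr1n.
Qed.

Lemma sum_psi_eq0 u : psi u != 1 -> \sum_(x : V) psi x = 0.
Proof.
move=> psiu_neq1.
have shift : \sum_(x : V) psi x = psi u * \sum_(x : V) psi x.
  rewrite {1}(reindex_inj (addrI u)) mulr_sumr.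
  by apply: eq_bigr => x _; rewrite psiD.
apply/eqP; move/eqP: shift; rewrite -subr_eq0 -{1}[\sum_x psi x]mul1r -mulrBl.
by rewrite mulf_eq0 subr_eq0 eq_sym (negbTE psiu_neq1).
Qed.

End AdditiveCharacter.

Section DotProduct.
Variables (F : finFieldType) (d : nat).
Implicit Types (x y m : 'rV[F]_d).

Lemma dotpC x y : dotp x y = dotp y x.
Proof. by apply: eq_bigr => i _; rewrite mulrC. Qed.

Lemma dotpDl x y m : dotp (x + y) m = dotp x m + dotp y m.
Proof. by rewrite /dotp -big_split; apply: eq_bigr => i _; rewrite mxE mulrDl. Qed.

Lemma dotpZl a x m : dotp (a *: x) m = a * dotp x m.
Proof. by rewrite /dotp mulr_sumr; apply: eq_bigr => i _; rewrite mxE mulrA. Qed.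

Lemma dotpNl x m : dotp (- x) m = - dotp x m.
Proof. by rewrite -scaleN1r dotpZl mulN1r. Qed.

Lemma dotp0l m : dotp 0 m = 0.
Proof. by rewrite -(scale0r 0) dotpZl mul0r. Qed.

Lemma dotpDr x y m : dotp m (x + y) = dotp m x + dotp m y.
Proof. by rewrite !(dotpC m) dotpDl. Qed.

Lemma dotpZr a x m : dotp m (a *: x) = a * dotp m x.
Proof. by rewrite !(dotpC m) dotpZl. Qed.

Lemma dotp_delta x (i : 'I_d) : dotp x (delta_mx 0 i) = x 0 i.
Proof.
rewrite /dotp (bigD1 i) //= big1 => [|k k_neq_i]; first by rewrite !mxE !eqxx mulr1 addr0.
by rewrite !mxE (negbTE k_neq_i) andbF mulr0.
Qed.

End DotProduct.

Section FieldCharacter.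
Variables (F : finFieldType) (chi : F -> algC).
Hypothesis chi_nontriv : nontriv_add_char chi.

Lemma chi0 : chi 0 = 1.
Proof. by case: chi_nontriv. Qed.

Lemma chiD : {morph chi : a b / a + b >-> a * b}.
Proof. by case: chi_nontriv => _ []. Qed.

Lemma norm_chi a : `|chi a| = 1.
Proof. exact: norm_psi chi0 chiD a. Qed.

Lemma conj_chi a : (chi a)^* = chi (- a).
Proof. exact: conj_psi chi0 chiD a. Qed.

Lemma sum_chi_onto (V : finZmodType) (l : V -> F) :
  {morph l : x y / x + y} -> (forall b, exists u, l u = b) ->
  \sum_(v : V) chi (l v) = 0.
Proof.
move=> lD l_onto; have [_ [_ [b chib_neq1]]] := chi_nontriv.
have [u lu] := l_onto b.
have psiD : {morph (fun v => chi (l v)) : x y / x + y >-> x * y}.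
  by move=> x y /=; rewrite lD chiD.
by apply: (sum_psi_eq0 psiD (u := u)); rewrite lu.
Qed.

Lemma sum_chi_mul a : \sum_(t : F) chi (t * a) = if a == 0 then #|F|%:R else 0.
Proof.
have [->|a_neq0] := eqVneq a 0.
  by under eq_bigr do rewrite mulr0 chi0; rewrite sumr_const.
apply: sum_chi_onto => [t s|b]; first by rewrite mulrDl.
by exists (b / a); rewrite divfK.
Qed.

Lemma card_zeros_char (T : finType) (g : T -> F) :
  #|F|%:R * #|[set x | g x == 0]|%:R = \sum_(x : T) \sum_(t : F) chi (t * g x).
Proof.
under eq_bigr do rewrite sum_chi_mul.
by rewrite -big_mkcond /= sumr_const mulr_natr cardsE.
Qed.

Variable d : nat.

Lemma sum_chi_dotp (v : 'rV[F]_d) :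
  \sum_(y : 'rV[F]_d) chi (dotp v y) = if v == 0 then (#|F| ^ d)%:R else 0.
Proof.
have [->|v_neq0] := eqVneq v 0.
  by under eq_bigr do rewrite dotp0l chi0; rewrite sumr_const card_mx mul1n.
have [i vi_neq0] : exists i, v 0 i != 0.
  apply/existsP; apply: contraNT v_neq0 => /existsPn v0.
  by apply/eqP/rowP => i; rewrite mxE; apply/eqP/negbNE/v0.
apply: sum_chi_onto => [y z|b]; first by rewrite dotpDr.
by exists ((b / v 0 i) *: delta_mx 0 i); rewrite dotpZr dotp_delta divfK.
Qed.

Lemma sum_sqr_norm_fourier (g : 'rV[F]_d -> algC) :
  \sum_(m : 'rV[F]_d) `|\sum_(z : 'rV[F]_d) chi (- dotp z m) * g z| ^+ 2 =
  (#|F| ^ d)%:R * \sum_(z : 'rV[F]_d) `|g z| ^+ 2.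
Proof.
transitivity (\sum_(m : 'rV[F]_d) \sum_(z : 'rV[F]_d) \sum_(w : 'rV[F]_d)
    g z * (g w)^* * chi (dotp (w - z) m)).
  apply: eq_bigr => m _; rewrite normCK rmorph_sum big_distrl /=.
  apply: eq_bigr => z _; rewrite big_distrr /=; apply: eq_bigr => w _.
  rewrite rmorphM /= conj_chi opprK dotpDl dotpNl chiD.
  by ring.
rewrite exchange_big /= mulr_sumr; apply: eq_bigr => z _.
rewrite exchange_big /=.
under eq_bigr do rewrite -mulr_sumr sum_chi_dotp subr_eq0.
rewrite (bigD1 z) //= eqxx big1 => [|w /negbTE ->]; last by rewrite mulr0.
by rewrite addr0 normCK mulrC.
Qed.

End FieldCharacter.

Section AdditiveEnergy.
Variables (F : finFieldType) (d : nat) (S : {set 'rV[F]_d}) (f : 'rV[F]_d -> algC).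
Local Notation vec := 'rV[F]_d.

Definition sum_pairs (z : vec) : {set vec * vec} :=
  [set p | (p.1 \in S) && (p.2 \in S) && (p.1 + p.2 == z)].

Definition self_conv (z : vec) : algC := \sum_(p in sum_pairs z) f p.1 * f p.2.

Lemma sum_pairsP z p :
  reflect [/\ p.1 \in S, p.2 \in S & p.1 + p.2 = z] (p \in sum_pairs z).
Proof. by rewrite inE -andbA; apply: (iffP and3P) => -[? ? e]; split=> //; apply/eqP. Qed.

Definition mass2 : algC := \sum_(x in S) `|f x| ^+ 2.

Lemma mass2_ge0 : 0 <= mass2.
Proof. by rewrite sumr_ge0 // => x _; rewrite exprn_ge0. Qed.

Lemma sum_pairs_partition (h : vec -> vec -> algC) :
  \sum_(x in S) \sum_(y in S) h x y = \sum_(z : vec) \sum_(p in sum_pairs z) h p.1 p.2.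
Proof.
rewrite pair_big_dep (partition_big (fun p => p.1 + p.2) xpredT) //=.
by apply: eq_bigr => z _; apply: eq_bigl => p; rewrite inE.
Qed.

Lemma sum_pairs_proj_le (pi : vec * vec -> vec) (h : vec -> algC) z :
  (forall x, 0 <= h x) -> {in sum_pairs z, forall p, pi p \in S} ->
  {in sum_pairs z &, injective pi} ->
  \sum_(p in sum_pairs z) h (pi p) <= \sum_(x in S) h x.
Proof.
move=> h_ge0 piS pi_inj; rewrite -big_imset //.
rewrite [X in _ <= X](big_setID (pi @: sum_pairs z)) /= (setIidPr _).
  by rewrite lerDl sumr_ge0.
by apply/subsetP => _ /imsetP[p /piS piS_p ->].
Qed.

Lemma norm_self_conv_le z : `|self_conv z| <= mass2.
Proof.
have sq_ge0 x : 0 <= `|f x| ^+ 2 by rewrite exprn_ge0.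
have fst_le : \sum_(p in sum_pairs z) `|f p.1| ^+ 2 <= mass2.
  apply: sum_pairs_proj_le => //; first by move=> p /sum_pairsP[].
  move=> [x y] [x' y'] /sum_pairsP[_ _ /= <-] /sum_pairsP[_ _ /=] + /= ex.
  by rewrite -ex => /addrI ->.
have snd_le : \sum_(p in sum_pairs z) `|f p.2| ^+ 2 <= mass2.
  apply: sum_pairs_proj_le => //; first by move=> p /sum_pairsP[].
  move=> [x y] [x' y'] /sum_pairsP[_ _ /= <-] /sum_pairsP[_ _ /=] + /= ey.
  by rewrite -ey => /addIr ->.
rewrite -(ler_pMn2r (isT : (0 < 2)%N)) [X in _ <= X]mulr2n.
apply: le_trans (lerD fst_le snd_le); rewrite -big_split /=.
apply: le_trans (_ : (\sum_(p in sum_pairs z) `|f p.1 * f p.2|) *+ 2 <= _).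
  by rewrite ler_pMn2r // ler_norm_sum.
by rewrite -sumrMnl; apply: ler_sum => p _; apply: normrM_mul2n_le.
Qed.

Lemma sum_sqr_norm_self_conv_le (K : algC) : 0 <= K ->
  (forall z, z != 0 -> (sum_count S z)%:R <= K) ->
  \sum_(z : vec) `|self_conv z| ^+ 2 <= (1 + K) * mass2 ^+ 2.
Proof.
move=> K_ge0 count_le.
pose weight z := \sum_(p in sum_pairs z) `|f p.1| ^+ 2 * `|f p.2| ^+ 2.
have weight_ge0 z : 0 <= weight z by rewrite sumr_ge0 // => p _; rewrite mulr_ge0 ?exprn_ge0.
have sum_weight : \sum_(z : vec) weight z = mass2 ^+ 2.
  rewrite /mass2 expr2 mulr_suml; under [RHS]eq_bigr do rewrite mulr_sumr.
  by rewrite sum_pairs_partition.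
rewrite (bigD1 0) //= mulrDl mul1r lerD //.
  by rewrite ler_pXn2r ?nnegrE ?mass2_ge0 ?norm_self_conv_le.
rewrite -sum_weight mulr_sumr [X in _ <= X](bigD1 0) //= ler_wpDl ?mulr_ge0 //.
apply: ler_sum => z z_neq0; apply: le_trans (sqr_norm_sum_le _ _) _.
under eq_bigr do rewrite normrM exprMn.
by apply: ler_wpM2r; [exact: weight_ge0 | exact: count_le].
Qed.

Variables (chi : F -> algC).
Hypothesis chi_nontriv : nontriv_add_char chi.

Lemma extop_sqr m : extop chi S f m ^+ 2 =
  #|S|%:R^-1 ^+ 2 * \sum_(z : vec) chi (- dotp z m) * self_conv z.
Proof.
rewrite /extop exprMn; congr (_ * _); rewrite expr2 mulr_suml.
under eq_bigr do rewrite mulr_sumr.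
rewrite sum_pairs_partition.
apply: eq_bigr => z _; rewrite mulr_sumr; apply: eq_bigr => p /setIdP[_ /eqP <-].
rewrite dotpDl opprD chiD //; ring.
Qed.

Lemma sum_norm4_extop : \sum_(m : vec) `|extop chi S f m| ^+ 4 =
  #|S|%:R^-1 ^+ 4 * (#|F| ^ d)%:R * \sum_(z : vec) `|self_conv z| ^+ 2.
Proof.
transitivity (\sum_(m : vec) #|S|%:R^-1 ^+ 4 *
     `|\sum_(z : vec) chi (- dotp z m) * self_conv z| ^+ 2).
  apply: eq_bigr => m _.
  rewrite -[4%N]/(2 * 2)%N exprM -normrX extop_sqr normrM normrX exprMn -exprM.
  by rewrite ger0_norm // invr_ge0 ler0n.
by rewrite -mulr_sumr sum_sqr_norm_fourier // mulrA.
Qed.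

Lemma sum_norm4_extop_le (K : algC) : 0 <= K ->
  (forall z, z != 0 -> (sum_count S z)%:R <= K) ->
  \sum_(m : vec) `|extop chi S f m| ^+ 4 <=
  #|S|%:R^-1 ^+ 4 * (#|F| ^ d)%:R * ((1 + K) * mass2 ^+ 2).
Proof.
move=> K_ge0 count_le; rewrite sum_norm4_extop.
apply: ler_wpM2l; first by rewrite mulr_ge0 ?exprn_ge0 ?invr_ge0.
exact: sum_sqr_norm_self_conv_le.
Qed.

End AdditiveEnergy.

Section QuadraticForm.
Variables (F : finFieldType) (d : nat) (A : 'M[F]_d).
Implicit Types (x y : 'rV[F]_d).

Lemma qform_dotp x : qform A x = dotp x (x *m A).
Proof.
rewrite /qform /dotp exchange_big; apply: eq_bigr => k _.
by rewrite mxE mulr_sumr; apply: eq_bigr => i _; rewrite [RHS]mulrC (mulrC (x 0 i)).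
Qed.

Lemma qformZ t x : qform A (t *: x) = t ^+ 2 * qform A x.
Proof. by rewrite !qform_dotp -scalemxAl dotpZl dotpZr mulrA -expr2. Qed.

Lemma qform0 : qform A 0 = 0.
Proof. by rewrite -(scale0r 0) qformZ expr0n mul0r. Qed.

Hypothesis A_sym : A^T = A.

Lemma dotp_mulmx_sym x y : dotp x (y *m A) = dotp y (x *m A).
Proof.
have A_symE i k : A k i = A i k by rewrite -{1}A_sym mxE.
rewrite /dotp; under eq_bigr do rewrite mxE mulr_sumr.
under [RHS]eq_bigr do rewrite mxE mulr_sumr.
rewrite exchange_big; apply: eq_bigr => i _; apply: eq_bigr => k _.
by rewrite A_symE mulrCA.
Qed.

Lemma qformD x y : qform A (x + y) = qform A x + qform A y + 2 * dotp x (y *m A).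
Proof.
by rewrite !qform_dotp mulmxDl !dotpDl !dotpDr (dotp_mulmx_sym y x); ring.
Qed.

End QuadraticForm.

Section GaussSum.
Variables (F : finFieldType) (d : nat) (A : 'M[F]_d) (chi : F -> algC).
Hypotheses (chi_nontriv : nontriv_add_char chi) (A_nondeg : nondeg_qform A).
Hypothesis two_neq0 : (2 : F) != 0.

Definition gauss_sum (t : F) : algC := \sum_(x : 'rV[F]_d) chi (t * qform A x).

(* Completing the square: shifting by [y] turns the product into a character sum
   over the linear form [2 t y A], which vanishes unless [y = 0]. *)
Lemma sqr_norm_gauss_sum t : t != 0 -> `|gauss_sum t| ^+ 2 = (#|F| ^ d)%:R.
Proof.
move=> t_neq0; rewrite normCK rmorph_sum /gauss_sum mulr_sumr.
under eq_bigr do rewrite mulr_suml.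
transitivity (\sum_(x : 'rV[F]_d) \sum_(y : 'rV[F]_d)
    chi (t * qform A y) * chi (dotp ((2 * t) *: (y *m A)) x)).
  apply: eq_bigr => x _; rewrite (reindex_inj (addrI x)); apply: eq_bigr => y _ /=.
  rewrite conj_chi // -!chiD //; congr (chi _).
  rewrite qformD ?A_nondeg.1 // dotpZl dotpC; ring.
rewrite exchange_big; under eq_bigr do rewrite -mulr_sumr.
rewrite (bigD1 0) //= [X in _ + X]big1 => [|y y_neq0]; last first.
  rewrite sum_chi_dotp // scaler_eq0 mulf_eq0 (negbTE two_neq0) (negbTE t_neq0).
  by rewrite mulmx_free_eq0 ?row_free_unit ?A_nondeg.2 // (negbTE y_neq0) mulr0.
by rewrite qform0 mulr0 chi0 // mul1r mul0mx scaler0 sum_chi_dotp // eqxx addr0.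
Qed.

Lemma card_Sj_dev k : #|F|%:R * #|Sj A k|%:R - (#|F| ^ d)%:R =
  \sum_(t | t != 0) chi (- (t * k)) * gauss_sum t.
Proof.
have -> : #|Sj A k| = #|[set x : 'rV[F]_d | qform A x - k == 0]|.
  by apply: eq_card => x; rewrite !inE subr_eq0.
rewrite (card_zeros_char chi_nontriv) exchange_big /= (bigD1 0) //=.
under eq_bigr do rewrite mul0r chi0 //.
rewrite sumr_const card_mx mul1n addrC addrK.
apply: eq_bigr => t _; rewrite /gauss_sum mulr_sumr; apply: eq_bigr => x _.
by rewrite -chiD // mulrBr addrC.
Qed.

Lemma card_Sj_dev_le k : `|#|F|%:R * #|Sj A k|%:R - (#|F| ^ d)%:R| ^+ 2 <=
  (#|F|.-1 ^ 2 * #|F| ^ d)%:R :> algC.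
Proof.
rewrite card_Sj_dev; apply: le_trans (sqr_norm_sum_le _ _) _.
under eq_bigr => t t_neq0 do
  rewrite normrM exprMn norm_chi // expr1n mul1r sqr_norm_gauss_sum //.
by rewrite sumr_const cardC1 -[(_ ^ d)%:R *+ _]mulr_natr -!natrM ler_nat mulnCA mulnC mulnn.
Qed.

End GaussSum.

Lemma card_hyperplane (F : finFieldType) (d : nat) (chi : F -> algC)
    (v : 'rV[F]_d) : nontriv_add_char chi -> v != 0 ->
  (#|F| * #|[set w : 'rV[F]_d | dotp w v == 0%R]| = #|F| ^ d)%N.
Proof.
move=> chi_nontriv v_neq0; apply/eqP.
rewrite -(eqr_nat algC) natrM (card_zeros_char chi_nontriv) exchange_big /=.
under eq_bigr do under eq_bigr do rewrite dotpC -dotpZl.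
under eq_bigr do rewrite sum_chi_dotp //.
rewrite (bigD1 0) //= scale0r eqxx big1 ?addr0 // => t t_neq0.
by rewrite scaler_eq0 (negbTE t_neq0) (negbTE v_neq0).
Qed.

Section Secants.
Variables (F : finFieldType) (d : nat) (A : 'M[F]_d) (j : F) (p0 : 'rV[F]_d).
Hypotheses (two_neq0 : (2 : F) != 0) (A_sym : A^T = A) (p0_in : qform A p0 = j).

Definition secant_dirs : {set 'rV[F]_d} :=
  [set w | (qform A w != 0) && (dotp w (p0 *m A) != 0)].

(* The second intersection of the line [p0 + s w] with the quadric [Q = j]. *)
Definition secant_param (w : 'rV[F]_d) : F := - (2 * dotp w (p0 *m A)) / qform A w.
Definition secant_point (w : 'rV[F]_d) := p0 + secant_param w *: w.

Lemma qform_secant_point w : w \in secant_dirs -> qform A (secant_point w) = j.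
Proof.
rewrite inE => /andP[qw_neq0 _].
rewrite qformD // p0_in qformZ -scalemxAl dotpZr dotp_mulmx_sym // /secant_param.
by field.
Qed.

Lemma card_secant_dirs_le : (#|secant_dirs| <= #|F| * #|Sj A j|)%N.
Proof.
rewrite -sum1_card (partition_big secant_point (mem (Sj A j))) /=; last first.
  by move=> w /qform_secant_point qw; rewrite inE qw.
rewrite -[#|Sj A j|]sum1_card big_distrr /= muln1; apply: leq_sum => u _.
rewrite sum1dep_card.
apply: leq_trans (leq_imset_card (fun s : F => s *: (u - p0)) (mem predT)).
apply/subset_leq_card/subsetP => w; rewrite inE => /andP[w_dir /eqP <-].
move: w_dir; rewrite inE => /andP[qw_neq0 bw_neq0].
have s_neq0 : secant_param w != 0.
  by rewrite /secant_param mulf_neq0 ?invr_eq0 ?oppr_eq0 ?mulf_neq0.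
apply/imsetP; exists (secant_param w)^-1 => //.
by rewrite /secant_point addrC addKr scalerA mulVf // scale1r.
Qed.

Lemma card_secant_dirs_ge : (#|F| ^ d <=
  #|Sj A 0%R| + #|[set w : 'rV[F]_d | dotp w (p0 *m A) == 0%R]| + #|secant_dirs|)%N.
Proof.
have <- : #|[set: 'rV[F]_d]| = (#|F| ^ d)%N by rewrite cardsT card_mx mul1n.
set H := [set w | _].
apply: leq_trans (subset_leq_card (_ : _ \subset Sj A 0 :|: H :|: secant_dirs)) _.
  apply/subsetP => w _; rewrite !inE.
  by case: (qform A w == 0); case: (dotp w (p0 *m A) == 0).
apply: leq_trans (leq_card_setU _ _) _; rewrite leq_add2r.
exact: leq_card_setU.
Qed.

End Secants.

Lemma card_ge3 (F : finFieldType) : (2 : F) != 0 -> (3 <= #|F|)%N.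
Proof.
move=> two_neq0; have one_neq2 : (1 : F) != 2.
  by rewrite -subr_eq0 [2]mulr2n opprD addrA subrr add0r oppr_eq0 oner_eq0.
apply: leq_trans (max_card (mem [set (0 : F); 1; 2])).
rewrite -setUA cardsU1 cards2 one_neq2 !inE negb_or.
by rewrite eq_sym oner_eq0 eq_sym two_neq0.
Qed.

Lemma subn_sqr_le_of_normC (a b c : nat) : `|a%:R - b%:R| ^+ 2 <= c%:R :> algC ->
  ((a - b) ^ 2 <= c)%N /\ ((b - a) ^ 2 <= c)%N.
Proof.
have [le_ab|/ltnW le_ba] := leqP a b.
  rewrite -normrN opprB -natrB // normr_nat -natrX ler_nat => dev.
  by rewrite (eqnP le_ab).
rewrite -natrB // normr_nat -natrX ler_nat => dev.
by rewrite (eqnP le_ba).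
Qed.

(* If [4 X < Y] then [Y - X > 3 Y / 4], so [9 Y^2 < 16 (Y - X)^2 <= 16 c Y]. *)
Lemma leq_of_sqr_dev (Y X c : nat) :
  (16 * c < 9 * Y)%N -> ((Y - X) ^ 2 <= c * Y)%N -> (Y <= 4 * X)%N.
Proof.
move=> cY dev; rewrite leqNgt; apply/negP => XY.
have lt3 : (3 * Y < 4 * (Y - X))%N by lia.
have cY2 : (16 * c * Y < 9 * Y * Y)%N by rewrite ltn_pmul2r -?mulnA //; lia.
have := ltn_mul lt3 lt3; rewrite -mulnn in dev; nia.
Qed.

Section QuadricLowerBound.
Variables (F : finFieldType) (d : nat) (A : 'M[F]_d) (chi : F -> algC).
Hypotheses (chi_nontriv : nontriv_add_char chi) (A_nondeg : nondeg_qform A).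
Hypothesis two_neq0 : (2 : F) != 0.

Lemma card_Sj_dev_nat k :
  ((#|F| * #|Sj A k| - #|F| ^ d) ^ 2 <= #|F|.-1 ^ 2 * #|F| ^ d)%N /\
  ((#|F| ^ d - #|F| * #|Sj A k|) ^ 2 <= #|F|.-1 ^ 2 * #|F| ^ d)%N.
Proof. by apply: subn_sqr_le_of_normC; rewrite natrM (card_Sj_dev_le chi_nontriv). Qed.

Lemma card_Sj_ge_high k : (3 <= d)%N -> (#|F| ^ d.-1 <= 4 * #|Sj A k|)%N.
Proof.
move=> d_ge3; have q_ge3 := card_ge3 two_neq0.
suff : (#|F| ^ d <= 4 * (#|F| * #|Sj A k|))%N.
  have -> : (#|F| ^ d = #|F| * #|F| ^ d.-1)%N by rewrite -expnS prednK //; lia.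
  by rewrite mulnCA leq_pmul2l //; lia.
have [_ dev] := card_Sj_dev_nat k.
apply: (leq_of_sqr_dev (c := #|F| ^ 2)).
  have P_ge3 : (3 <= #|F| ^ (d - 2))%N.
    by apply: leq_trans (q_ge3) _; rewrite -{1}[#|F|]expn1 leq_exp2l; lia.
  rewrite -(subnK (ltnW d_ge3)) expnD mulnA ltn_pmul2r ?expn_gt0; lia.
by apply: leq_trans dev _; rewrite leq_mul2r leq_exp2r // leq_pred orbT.
Qed.

Lemma card_Sj_ge_plane j : d = 2%N -> j != 0 -> (#|F| <= 4 * #|Sj A j|)%N.
Proof.
move=> d2 j_neq0; have q_ge3 := card_ge3 two_neq0.
have [dev0 _] := card_Sj_dev_nat 0; have [_ devj] := card_Sj_dev_nat j.
have qd : (#|F| ^ d = #|F| ^ 2)%N by rewrite d2.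
rewrite qd -expnMn leq_exp2r // in dev0 devj.
have /card_gt0P[p0 p0_in] : (0 < #|Sj A j|)%N by move: devj; clear -q_ge3; nia.
have {}p0_in : qform A p0 = j by move: p0_in; rewrite inE => /eqP.
have p0A_neq0 : p0 *m A != 0.
  rewrite mulmx_free_eq0 ?row_free_unit ?A_nondeg.2 //.
  by apply: contra_neq j_neq0 => p0_eq0; rewrite -p0_in p0_eq0 qform0.
have := card_hyperplane chi_nontriv p0A_neq0; rewrite qd => /eqP.
rewrite -mulnn eqn_pmul2l; last by lia.
move=> /eqP card_H.
have := card_secant_dirs_ge A p0; rewrite card_H qd.
have := card_secant_dirs_le two_neq0 A_nondeg.1 p0_in.
by move: dev0; clear -q_ge3; nia.
Qed.

Lemma card_Sj_ge j : (2 <= d)%N -> j != 0 -> (#|F| ^ d.-1 <= 4 * #|Sj A j|)%N.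
Proof.
move=> d_ge2 j_neq0; have [d_ge3|d_lt3] := leqP 3 d; first exact: card_Sj_ge_high.
have d2 : d = 2%N by lia.
have -> : d.-1 = 1%N by rewrite d2.
by rewrite expn1 card_Sj_ge_plane.
Qed.

End QuadricLowerBound.

Lemma l4_constant_le (q s d : nat) (C : algC) : 0 <= C -> (0 < q)%N -> (2 <= d)%N ->
  (q ^ d.-1 <= 4 * s)%N ->
  (q ^ d)%:R * (1 + C * q%:R ^+ (d - 2)) <= 16 * (1 + C) * s%:R ^+ 2.
Proof.
move=> C_ge0 q_gt0 d_ge2 qs.
have sqr_qs : (q ^ d.-1 * q ^ d.-1 <= 16 * (s * s))%N.
  by have := leq_mul qs qs; lia.
have q_pow : (q ^ d * q ^ (d - 2) = q ^ d.-1 * q ^ d.-1)%N by rewrite -!expnD; congr expn; lia.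
have qd_le : (q ^ d <= q ^ d.-1 * q ^ d.-1)%N.
  by rewrite -q_pow leq_pmulr ?expn_gt0 ?q_gt0.
rewrite mulrDr mulr1 mulrCA -natrX -natrM q_pow.
have -> : 16 * (1 + C) * s%:R ^+ 2 = (16 * (s * s))%:R + C * (16 * (s * s))%:R.
  by rewrite !natrM; ring.
apply: lerD; first by rewrite ler_nat (leq_trans qd_le).
by rewrite ler_wpM2l // ler_nat.
Qed.

Lemma root4_le (K X Y : algC) : 0 <= K -> 0 <= X -> 0 <= Y -> X <= K * Y ^+ 2 ->
  4.-root X <= 4.-root K * sqrtC Y.
Proof.
move=> K_ge0 X_ge0 Y_ge0 XKY.
rewrite -(ler_pXn2r (isT : (0 < 4)%N)) ?nnegrE ?mulr_ge0 ?rootC_ge0 ?sqrtC_ge0 //.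
by rewrite exprMn !rootCK // -[4%N]/(2 * 2)%N exprM sqrtCK.
Qed.

Theorem lemma4p1 (d : nat) (hd : (2 <= d)%N) (C : algC) (hC : 0 <= C) :
  exists C' : algC, 0 <= C' /\
  forall (F : finFieldType) (A : 'M[F]_d) (j : F) (chi : F -> algC),
    (2 : F) != 0 ->
    nondeg_qform A ->
    j != 0 ->
    nontriv_add_char chi ->
    (forall x : 'rV[F]_d, x != 0 ->
       (sum_count (Sj A j) x)%:R <= C * (#|F|%:R) ^+ (d - 2)) ->
    Rstar_2_4_le chi (Sj A j) C'.
Proof.
have C'_ge0 : 0 <= 16 * (1 + C) by rewrite mulr_ge0 ?ler0n ?addr_ge0.
exists (4.-root (16 * (1 + C))); split; first by rewrite rootC_ge0.
move=> F A j chi two_neq0 A_nondeg j_neq0 chi_nontriv count_le f.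
have q_gt0 : (0 < #|F|)%N by apply/card_gt0P; exists 0.
have card_ge := card_Sj_ge chi_nontriv A_nondeg two_neq0 hd j_neq0.
have S_gt0 : (0 < #|Sj A j|)%N.
  have : (0 < #|F| ^ d.-1)%N by rewrite expn_gt0 q_gt0.
  lia.
set S := Sj A j in count_le card_ge S_gt0 *.
have S_neq0 : (#|S|%:R : algC) != 0 by rewrite pnatr_eq0 -lt0n.
have Cq_ge0 : 0 <= C * #|F|%:R ^+ (d - 2) by rewrite mulr_ge0 ?exprn_ge0 ?ler0n.
apply: root4_le => //.
- by rewrite sumr_ge0 // => m _; rewrite exprn_ge0.
- by rewrite mulr_ge0 ?invr_ge0 ?ler0n ?mass2_ge0.
apply: le_trans (sum_norm4_extop_le f chi_nontriv Cq_ge0 count_le) _.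
rewrite -/(mass2 S f) [X in _ <= X](_ : _ = #|S|%:R^-1 ^+ 4 *
  (16 * (1 + C) * #|S|%:R ^+ 2 * mass2 S f ^+ 2)); last by field.
rewrite -(mulrA (#|S|%:R^-1 ^+ 4)); apply: ler_wpM2l; first by rewrite exprn_ge0 ?invr_ge0.
rewrite mulrA; apply: ler_wpM2r; first by rewrite exprn_ge0 ?mass2_ge0.
exact: l4_constant_le hC q_gt0 hd card_ge.
Qed.
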